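(* Let $\mathfrak h\subseteq\Phi^+$ be a Hessenberg set and let $H_T^*(\mathfrak h)$ be its GKM ring. Then $H_T^*(\mathfrak h)$ is stable under the action of $W$ on $\mathrm{Maps}(W,\mathbb R[\Delta])$ given by $(w\cdot\mathcal P)(u)=w\,\mathcal P(w^{-1}u)$ for $w,u\in W$, where on the right $w$ acts on the polynomial $\mathcal P(w^{-1}u)\in\mathbb R[\Delta]$. That is, if $\mathcal P\in H_T^*(\mathfrak h)$ and $w\in W$ then $w\cdot\mathcal P\in H_T^*(\mathfrak h)$.
   Context: Let $V$ be a finite-dimensional real vector space with a symmetric positive definite bilinear form $(\,,)$; for nonzero $\alpha\in V$ let $s_\alpha(v)=v-\frac{2(\alpha,v)}{(\alpha,\alpha)}\alpha$. Let $\Phi\subset V$ be a (crystallographic) root system with base $\Delta=\{\alpha_1,\dots,\alpha_k\}$, positive roots $\Phi^+$ and negative roots $\Phi^-=-\Phi^+$. Write $\alpha\prec\beta$ if $\beta-\alpha$ is a sum of positive roots. A Hessenberg set is a subset $\mathfrak h\subseteq\Phi^+$ whose complement $\Phi^+\setminus\mathfrak h$ is upward closed in $\Phi^+$ (if $\beta\in\Phi^+\setminus\mathfrak h$, $\alpha\in\Phi^+$ and $\beta\prec\alpha$, then $\alpha\in\Phi^+\setminus\mathfrak h$). $W$ is the Weyl group generated by the reflections $s_{\alpha_i}$; it acts linearly on $V$ and hence on the polynomial ring $\mathbb R[\Delta]=\mathbb R[\alpha_1,\dots,\alpha_k]$. The Hessenberg graph $\Gamma_{\mathfrak h}$ has vertex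 set $W$ and a directed edge $u\to w$ whenever $w=s_\alpha u$ with $\alpha\in\Phi^+$ and $w^{-1}\alpha\in-\mathfrak h$. The GKM ring is $H_T^*(\mathfrak h)=\{\mathcal P:W\to\mathbb R[\Delta] : \mathcal P(w)-\mathcal P(s_\alpha w)\in\langle\alpha\rangle \text{ for every edge } w\to s_\alpha w \text{ or } s_\alpha w\to w \text{ of }\Gamma_{\mathfrak h}\}$, where $\langle\alpha\rangle$ is the principal ideal generated by $\alpha$. *)

From HB Require Import structures.
From mathcomp Require Import all_boot all_order all_algebra.
From mathcomp Require Import mpoly.
Set Implicit Arguments. Unset Strict Implicit. Unset Printing Implicit Defensive.
Import Order.TTheory GRing.Theory Num.Theory.
Local Open Scope ring_scope.

(* Linear maps of V are matrices M acting on the right: v |-> v *m M.    *)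

Section Hess.
Variables (R : realFieldType) (n k : nat).
Variable B : 'M[R]_n.

Definition form (u v : 'rV[R]_n) : R := (u *m B *m v^T) 0 0.

Definition symmetric_posdef : Prop :=
  B^T = B /\ forall v : 'rV[R]_n, v != 0 -> 0 < form v v.

Definition sref (a v : 'rV[R]_n) : 'rV[R]_n :=
  v - (2 * form a v / form a a) *: a.

Definition reflmx (a : 'rV[R]_n) : 'M[R]_n := lin1_mx (sref a).

Definition app (w : 'M[R]_n) (v : 'rV[R]_n) : 'rV[R]_n := v *m w.
(* compose w1 w2 = w1 o w2 *)
Definition compose (w1 w2 : 'M[R]_n) : 'M[R]_n := w2 *m w1.

(* (crystallographic, reduced) root system, Humphreys' axioms *)
Definition is_root_system (Phi : seq 'rV[R]_n) : Prop :=
  [/\ (0 : 'rV[R]_n) \notin Phi,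
      (forall v : 'rV[R]_n, exists c : 'I_(size Phi) -> R,
          v = \sum_(i < size Phi) c i *: Phi`_i),
      (forall a, a \in Phi -> forall c : R, c *: a \in Phi -> c = 1 \/ c = -1),
      (forall a b, a \in Phi -> b \in Phi -> sref a b \in Phi) &
      (forall a b, a \in Phi -> b \in Phi ->
          exists z : int, 2 * form a b / form a a = z%:~R)].

Definition is_base (Phi : seq 'rV[R]_n) (alpha : 'I_k -> 'rV[R]_n) : Prop :=
  [/\ (forall i, alpha i \in Phi),
      (forall c : 'I_k -> R, \sum_i c i *: alpha i = 0 -> forall i, c i = 0) &
      (forall b, b \in Phi -> exists c : 'I_k -> int,
          b = \sum_i (c i)%:~R *: alpha i /\
          ((forall i, 0 <= c i) \/ (forall i, c i <= 0)))].

Variables (Phi : seq 'rV[R]_n) (alpha : 'I_k -> 'rV[R]_n).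

Definition pos_root (b : 'rV[R]_n) : Prop :=
  b \in Phi /\ exists c : 'I_k -> R,
    b = \sum_i c i *: alpha i /\ forall i, 0 <= c i.

Definition prec (a b : 'rV[R]_n) : Prop :=
  exists s : seq 'rV[R]_n, (forall x, x \in s -> pos_root x) /\
    b - a = \sum_(x <- s) x.

Definition hessenberg (h : 'rV[R]_n -> Prop) : Prop :=
  (forall b, h b -> pos_root b) /\
  (forall b a, pos_root b -> ~ h b -> pos_root a -> prec b a -> ~ h a).

(* Weyl group: the group generated by the simple reflections; a word is a *)
(* list of (generator, inverted?) pairs *)
Definition word_mx (s : seq ('I_k * bool)) : 'M[R]_n :=
  foldr (fun ib m => compose (if ib.2 then invmx (reflmx (alpha ib.1))
                                     else reflmx (alpha ib.1)) m) 1%:M s.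

Definition inW (w : 'M[R]_n) : Prop := exists s, w = word_mx s.

(* R[Delta] = R[alpha_1, ..., alpha_k] = {mpoly R[k]}, 'X_i <-> alpha_i *)
Definition basemx : 'M[R]_(k, n) := \matrix_(i < k) alpha i.
(* coordinates of v in the basis Delta (for v in the span of Delta) *)
Definition coord (v : 'rV[R]_n) : 'rV[R]_k := v *m pinvmx basemx.
Definition lin (v : 'rV[R]_n) : {mpoly R[k]} :=
  \sum_(i < k) (coord v) 0 i *: 'X_i.

Definition polyact (w : 'M[R]_n) (P : {mpoly R[k]}) : {mpoly R[k]} :=
  comp_mpoly [tuple lin (app w (alpha i)) | i < k] P.

Definition in_ideal (P : {mpoly R[k]}) (a : 'rV[R]_n) : Prop :=
  exists q : {mpoly R[k]}, P = q * lin a.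

Variable h : 'rV[R]_n -> Prop.

Definition edge (u w : 'M[R]_n) (a : 'rV[R]_n) : Prop :=
  [/\ inW u, inW w, pos_root a, w = compose (reflmx a) u &
      h (- app (invmx w) a)].

(* GKM ring: maps W -> R[Delta] (values outside W are irrelevant) *)
Definition GKM (P : 'M[R]_n -> {mpoly R[k]}) : Prop :=
  forall u w a, edge u w a -> in_ideal (P u - P w) a.

Definition Wact (w : 'M[R]_n) (P : 'M[R]_n -> {mpoly R[k]}) :
  'M[R]_n -> {mpoly R[k]} :=
  fun u => polyact w (P (compose (invmx w) u)).

End Hess.

From Pilot Require Import Defs.
From HB Require Import structures.
From mathcomp Require Import all_boot all_order all_algebra.
From mathcomp Require Import mpoly.
From mathcomp Require Import ring.
Set Implicit Arguments. Unset Strict Implicit. Unset Printing Implicit Defensive.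
Import Order.TTheory GRing.Theory Num.Theory.
Local Open Scope ring_scope.

(* The simple reflections are isometries, so W acts by isometries, maps roots
   to roots and conjugates reflections: s_{x a} = x s_a x^-1.  Hence x^-1
   maps an edge u -> v with label a to an edge between x^-1 u and x^-1 v with
   label +-x^-1 a (reversed when x^-1 a is negative), and the Hessenberg
   condition is unchanged because (x^-1 v)^-1 (x^-1 a) = v^-1 a.  Applying
   the ring automorphism x of R[Delta] to the divisibility relation along the
   transported edge gives the one along the original edge. *)

Section Form.
Variables (R : realFieldType) (n : nat) (B : 'M[R]_n).
Local Notation fm := (Defs.form B).

Lemma formDl u u' v : fm (u + u') v = fm u v + fm u' v.
Proof. by rewrite /Defs.form !mulmxDl mxE. Qed.

Lemma formZl c u v : fm (c *: u) v = c * fm u v.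
Proof. by rewrite /Defs.form -!scalemxAl mxE. Qed.

Lemma formDr u v v' : fm u (v + v') = fm u v + fm u v'.
Proof. by rewrite /Defs.form linearD /= mulmxDr mxE. Qed.

Lemma formZr c u v : fm u (c *: v) = c * fm u v.
Proof. by rewrite /Defs.form linearZ /= -scalemxAr mxE. Qed.

Lemma formNl u v : fm (- u) v = - fm u v.
Proof. by rewrite -scaleN1r formZl mulN1r. Qed.

Lemma formNr u v : fm u (- v) = - fm u v.
Proof. by rewrite -scaleN1r formZr mulN1r. Qed.

Lemma formBl u u' v : fm (u - u') v = fm u v - fm u' v.
Proof. by rewrite formDl formNl. Qed.

Lemma formBr u v v' : fm u (v - v') = fm u v - fm u v'.
Proof. by rewrite formDr formNr. Qed.

Lemma formC : B^T = B -> forall u v, fm u v = fm v u.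
Proof.
move=> sym_B u v; rewrite /Defs.form.
have -> (M : 'M[R]_1) : M 0 0 = M^T 0 0 by rewrite mxE.
by rewrite !trmx_mul trmxK sym_B mulmxA.
Qed.

End Form.

Section Reflection.
Variables (R : realFieldType) (n : nat) (B : 'M[R]_n).
Local Notation fm := (Defs.form B).
Local Notation s := (sref B).
Local Notation r := (reflmx B).

Lemma sref_is_linear a : linear (s a).
Proof.
move=> c u v; rewrite /sref formDr formZr mulrDr mulrDl scalerDl.
rewrite mulrCA -!mulrA scalerBr -scalerA !mulrA.
by rewrite opprD addrACA.
Qed.

HB.instance Definition _ a :=
  GRing.isLinear.Build R 'rV[R]_n 'rV[R]_n *:%R (s a) (sref_is_linear a).

Lemma reflmxE a v : v *m r a = s a v.
Proof. exact: mul_rV_lin1. Qed.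

Lemma sref_root a : fm a a != 0 -> s a a = - a.
Proof.
move=> a_neq0; rewrite /sref -mulrA divff // mulr1 scaler_nat mulr2n.
by rewrite opprD addNKr.
Qed.

Lemma srefK a : fm a a != 0 -> involutive (s a).
Proof.
move=> a_neq0 v; rewrite /sref formBr formZr.
have -> : 2 * (fm a v - 2 * fm a v / fm a a * fm a a) / fm a a
          = - (2 * fm a v / fm a a) by field.
by rewrite scaleNr opprK subrK.
Qed.

Lemma sref_isometry a : B^T = B -> fm a a != 0 ->
  forall u v, fm (s a u) (s a v) = fm u v.
Proof.
move=> sym_B a_neq0 u v; rewrite /sref !(formBl, formBr, formZl, formZr).
by rewrite (formC sym_B u a); field.
Qed.

Lemma reflmxN a : r (- a) = r a.
Proof.
apply/eqP/mulmxP => v; rewrite !reflmxE /sref.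
by rewrite formNl formNr formNl opprK mulrN mulNr scalerN scaleNr opprK.
Qed.

Lemma reflmx_sqr a : fm a a != 0 -> r a *m r a = 1%:M.
Proof.
move=> a_neq0; apply/eqP/mulmxP => v.
by rewrite mulmxA !reflmxE srefK // mulmx1.
Qed.

Lemma reflmx_unit a : fm a a != 0 -> r a \in unitmx.
Proof. by move=> a_neq0; case: (mulmx1_unit (reflmx_sqr a_neq0)). Qed.

Lemma invmx_reflmx a : fm a a != 0 -> invmx (r a) = r a.
Proof.
move=> a_neq0.
by rewrite -[RHS]mul1mx -(mulVmx (reflmx_unit a_neq0)) -mulmxA reflmx_sqr ?mulmx1.
Qed.

Lemma reflmx_conj (x : 'M[R]_n) a : x \in unitmx ->
  (forall u v, fm (u *m x) (v *m x) = fm u v) ->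
  r (a *m x) = invmx x *m r a *m x.
Proof.
move=> x_unit x_isometry; apply/eqP/mulmxP => v.
rewrite !mulmxA !reflmxE /sref mulmxBl -scalemxAl mulmxKV //.
rewrite x_isometry; congr (_ - (_ / _) *: _).
by rewrite -{1}(mulmxKV x_unit v) x_isometry.
Qed.

End Reflection.

Lemma invmxM (R : comUnitRingType) (n : nat) (A C : 'M[R]_n) :
  A \in unitmx -> C \in unitmx -> invmx (A *m C) = invmx C *m invmx A.
Proof.
move=> A_unit C_unit; have AC_unit : A *m C \in unitmx by rewrite unitmx_mul A_unit.
have AC_inv : A *m C *m (invmx C *m invmx A) = 1%:M.
  by rewrite mulmxA -(mulmxA A) mulmxV // mulmx1 mulmxV.
by rewrite -[RHS]mul1mx -(mulVmx AC_unit) -mulmxA AC_inv mulmx1.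
Qed.

Section PolynomialAction.
Variables (R : realFieldType) (n k : nat) (alpha : 'I_k -> 'rV[R]_n).
Local Notation lin := (lin alpha).
Local Notation polyact := (polyact alpha).
Local Notation in_ideal := (in_ideal alpha).

Lemma lin_is_linear : linear lin.
Proof.
move=> c u v; rewrite /Defs.lin /Defs.coord mulmxDl -scalemxAl scaler_sumr -big_split.
by apply: eq_bigr => i _; rewrite !mxE scalerDl scalerA.
Qed.

HB.instance Definition _ :=
  GRing.isLinear.Build R 'rV[R]_n {mpoly R[k]} *:%R lin lin_is_linear.

Lemma polyactB w P Q : polyact w (P - Q) = polyact w P - polyact w Q.
Proof. exact: rmorphB. Qed.

Lemma polyact_lin w b : (b <= basemx alpha)%MS -> polyact w (lin b) = lin (b *m w).
Proof.
move=> b_span; rewrite /polyact {2}/Defs.lin raddf_sum /=.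
rewrite -[b in RHS](mulmxKpV b_span) -/(Defs.coord alpha b).
rewrite (mulmx_sum_row (Defs.coord alpha b)) mulmx_suml linear_sum /=.
apply: eq_bigr => i _; rewrite comp_mpolyZ comp_mpolyXU -tnth_nth tnth_mktuple.
by rewrite rowK -scalemxAl linearZ.
Qed.

Lemma polyact_in_ideal w P b : (b <= basemx alpha)%MS ->
  in_ideal P b -> in_ideal (polyact w P) (b *m w).
Proof.
move=> b_span [q ->]; exists (polyact w q).
by rewrite -polyact_lin // [polyact w _]rmorphM.
Qed.

Lemma in_idealNr P a : in_ideal P (- a) -> in_ideal P a.
Proof. by case=> q ->; exists (- q); rewrite linearN mulrN mulNr. Qed.

Lemma in_ideal_subC P Q a : in_ideal (P - Q) a -> in_ideal (Q - P) a.
Proof. by case=> q PQ_def; exists (- q); rewrite -opprB PQ_def mulNr. Qed.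

End PolynomialAction.

Section WeylGroup.
Variables (R : realFieldType) (n k : nat) (B : 'M[R]_n).
Variables (Phi : seq 'rV[R]_n) (alpha : 'I_k -> 'rV[R]_n).
Hypothesis HB : symmetric_posdef B.
Hypothesis HPhi : is_root_system B Phi.
Hypothesis Hbase : is_base Phi alpha.
Local Notation fm := (Defs.form B).
Local Notation r := (reflmx B).
Local Notation inW := (inW B alpha).

Lemma form_root_neq0 a : a \in Phi -> fm a a != 0.
Proof.
case: HPhi => Phi_neq0 _ _ _ _; case: HB => _ B_pos a_root.
by rewrite lt0r_neq0 // B_pos //; apply: contraNneq Phi_neq0 => <-.
Qed.

Lemma simple_root i : alpha i \in Phi.
Proof. by case: Hbase. Qed.

Lemma form_simple_neq0 i : fm (alpha i) (alpha i) != 0.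
Proof. exact/form_root_neq0/simple_root. Qed.

Definition srefl_prod (l : seq 'I_k) : 'M[R]_n :=
  foldr (fun i m => m *m r (alpha i)) 1%:M l.

(* Inverted generators can be dropped: simple reflections are involutions. *)
Lemma word_mxE s : word_mx B alpha s = srefl_prod (map fst s).
Proof.
elim: s => [|[i []] s IH] //=; rewrite /compose IH //.
by rewrite invmx_reflmx ?form_simple_neq0.
Qed.

Lemma inWP w : inW w <-> exists l, w = srefl_prod l.
Proof.
split=> [[s ->]|[l ->]]; first by exists (map fst s); rewrite word_mxE.
exists [seq (i, false) | i <- l]; rewrite word_mxE -map_comp.
by rewrite map_id_in.
Qed.

Lemma srefl_prod_cat l1 l2 : srefl_prod (l1 ++ l2) = srefl_prod l2 *m srefl_prod l1.
Proof. by elim: l1 => [|i l1 IH] /=; rewrite ?mulmx1 // IH mulmxA. Qed.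

Lemma srefl_prod_unit l : srefl_prod l \in unitmx.
Proof.
elim: l => [|i l IH] /=; first exact: unitmx1.
by rewrite unitmx_mul IH reflmx_unit ?form_simple_neq0.
Qed.

Lemma invmx_srefl_prod l : invmx (srefl_prod l) = srefl_prod (rev l).
Proof.
elim: l => [|i l IH] /=; first by rewrite invmx1.
rewrite invmxM ?srefl_prod_unit ?reflmx_unit ?form_simple_neq0 // IH.
by rewrite invmx_reflmx ?form_simple_neq0 // rev_cons -cats1 srefl_prod_cat /= mul1mx.
Qed.

Lemma inW_unit w : inW w -> w \in unitmx.
Proof. by case/inWP=> l ->; apply: srefl_prod_unit. Qed.

Lemma inW_compose u w : inW u -> inW w -> inW (compose u w).
Proof.
move=> /inWP[l1 ->] /inWP[l2 ->]; apply/inWP.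
by exists (l1 ++ l2); rewrite srefl_prod_cat.
Qed.

Lemma inW_invmx w : inW w -> inW (invmx w).
Proof. by case/inWP=> l ->; apply/inWP; exists (rev l); rewrite invmx_srefl_prod. Qed.

Lemma inW_isometry w : inW w -> forall u v, fm (u *m w) (v *m w) = fm u v.
Proof.
case: HB => sym_B _; case/inWP=> l ->.
elim: l => [|i l IH] u v /=; first by rewrite !mulmx1.
by rewrite !mulmxA !reflmxE sref_isometry ?IH ?form_simple_neq0.
Qed.

Lemma inW_root w a : inW w -> a \in Phi -> a *m w \in Phi.
Proof.
case: HPhi => _ _ _ Phi_sref _; case/inWP=> l ->.
elim: l a => [|i l IH] a a_root /=; first by rewrite mulmx1.
by rewrite mulmxA reflmxE Phi_sref ?simple_root ?IH.
Qed.

Lemma root_span a : a \in Phi -> (a <= basemx alpha)%MS.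
Proof.
case: Hbase => _ _ /[apply] -[c [-> _]].
have -> : \sum_i (c i)%:~R *: alpha i = (\row_i (c i)%:~R) *m basemx alpha.
  by rewrite mulmx_sum_row; apply: eq_bigr => i _; rewrite rowK mxE.
exact: submxMl.
Qed.

Lemma pos_rootVneg a : a \in Phi -> pos_root Phi alpha a \/ pos_root Phi alpha (- a).
Proof.
move=> a_root; case: Hbase => _ _ /(_ a a_root) [c [a_def [c_ge0|c_le0]]].
  by left; split=> //; exists (fun i => (c i)%:~R); split=> // i; rewrite ler0z.
right; split.
  case: HPhi => _ _ _ Phi_sref _.
  by rewrite -(sref_root (form_root_neq0 a_root)) Phi_sref.
exists (fun i => - (c i)%:~R); split=> [|i]; last by rewrite oppr_ge0 lerz0.
by rewrite a_def -sumrN; apply: eq_bigr => i _; rewrite scaleNr.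
Qed.

Variable h : 'rV[R]_n -> Prop.
Local Notation edge := (edge B Phi alpha h).

Lemma edge_translate x u v a : inW x -> edge u v a ->
  let b := a *m invmx x in
  edge (compose (invmx x) u) (compose (invmx x) v) b \/
  edge (compose (invmx x) v) (compose (invmx x) u) (- b).
Proof.
move=> xW [uW vW a_pos v_def h_a] b; rewrite /compose in v_def *.
have x_unit := inW_unit xW.
have [u_unit v_unit] := (inW_unit uW, inW_unit vW).
have a_neq0 : fm a a != 0 by apply: form_root_neq0; case: a_pos.
have b_root : b \in Phi by apply: inW_root => //; [apply: inW_invmx | case: a_pos].
have ux'W : inW (u *m invmx x) by apply: inW_compose => //; apply: inW_invmx.
have vx'W : inW (v *m invmx x) by apply: inW_compose => //; apply: inW_invmx.
have r_b : r b = x *m r a *m invmx x.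
  rewrite /b reflmx_conj ?invmxK ?unitmx_inv //.
  by apply: inW_isometry => //; apply: inW_invmx.
have v'_def : v *m invmx x = u *m invmx x *m r b.
  by rewrite r_b v_def !mulmxA mulmxKV.
have h_b : - app (invmx (v *m invmx x)) b = - app (invmx v) a.
  by rewrite /app /b invmxM ?unitmx_inv // invmxK mulmxA mulmxKV.
have [b_pos|Nb_pos] := pos_rootVneg b_root.
  by left; split; rewrite // h_b.
right; split => //.
  by rewrite /compose reflmxN v'_def -mulmxA reflmx_sqr ?form_root_neq0 ?mulmx1.
move: h_a; rewrite /app /b invmxM ?unitmx_inv // invmxK mulNmx opprK mulmxA mulmxKV //.
rewrite v_def invmxM ?reflmx_unit // invmx_reflmx // mulmxA reflmxE sref_root //.
by rewrite mulNmx opprK.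
Qed.

End WeylGroup.

Theorem proposition2p3 (R : realFieldType) (n k : nat) (B : 'M[R]_n)
  (Phi : seq 'rV[R]_n) (alpha : 'I_k -> 'rV[R]_n) (h : 'rV[R]_n -> Prop)
  (HB : symmetric_posdef B)
  (HPhi : is_root_system B Phi)
  (Hbase : is_base Phi alpha)
  (Hh : hessenberg Phi alpha h)
  (P : 'M[R]_n -> {mpoly R[k]}) (HP : GKM B Phi alpha h P)
  (w : 'M[R]_n) (Hw : inW B alpha w) :
  GKM B Phi alpha h (Wact alpha w P).
Proof.
move=> u v a uva; rewrite /Wact.
have w_unit := inW_unit HB HPhi Hbase Hw.
set b := a *m invmx w.
have b_span : (b <= basemx alpha)%MS.
  apply: (root_span Hbase); apply: (inW_root HB HPhi Hbase (inW_invmx HB HPhi Hbase Hw)).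
  by case: uva => _ _ [].
have [e|e] := edge_translate HB HPhi Hbase Hw uva.
  by have := polyact_in_ideal w b_span (HP _ _ _ e); rewrite polyactB mulmxKV.
have Nb_span : (- b <= basemx alpha)%MS by rewrite eqmx_opp.
have := polyact_in_ideal w Nb_span (HP _ _ _ e).
by rewrite polyactB mulNmx mulmxKV // => /in_idealNr /in_ideal_subC.
Qed.
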